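(* Let $m_1\in\mathbb N$, $\theta=(\theta_1,\dots,\theta_{m_1})$ with $\theta_i>0$, real numbers $d_1,\dots,d_{m_1}$, and a $C^1$ function $u=(u_1,\dots,u_{m_1})$ of $x\in\mathbb{R}^n$ with values in $[0,\infty)^{m_1}$. Then for every integer $p\ge2$, $$\sum_{|\beta|=p-1}\binom{p}{\beta}\theta^{\beta^2}\sum_{i=1}^{m_1}\theta_i^{2\beta_i+1}d_i\nabla u_i\cdot\nabla u^\beta=\sum_{|\beta|=p-2}\binom p\beta\theta^{\beta^2}u^\beta\sum_{l=1}^n\sum_{i,j=1}^{m_1}a_{i,j}\frac{\partial u_i}{\partial x_l}\frac{\partial u_j}{\partial x_l},$$ where, for each $\beta$, $(a_{i,j})$ is the symmetric $m_1\times m_1$ matrix with $a_{i,j}=\frac{d_i+d_j}{2}\theta_i^{2\beta_i+1}\theta_j^{2\beta_j+1}$ for $i\ne j$ and $a_{i,i}=d_i\theta_i^{4\beta_i+4}$.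
   Context: Sums are over $\beta\in\mathbb Z_+^{m_1}$ ($m_1$-tuples of nonnegative integers); $|\beta|=\sum_i\beta_i$, $\beta^2=(\beta_1^2,\dots,\beta_{m_1}^2)$, $z^\alpha=\prod_iz_i^{\alpha_i}$ with $0^0=1$, and $\binom{p}{\beta}=\frac{p!}{\beta_1!\cdots\beta_{m_1}!}$ (also used when $|\beta|<p$). *)

From HB Require Import structures.
From mathcomp Require Import all_boot all_order all_algebra.
From mathcomp Require Import all_classical all_reals all_analysis.
Set Implicit Arguments. Unset Strict Implicit. Unset Printing Implicit Defensive.
Import Order.TTheory GRing.Theory Num.Theory.
Import numFieldNormedType.Exports.
Local Open Scope ring_scope.

(* Multi-indices beta in Z_+^{m1} with all entries <= p are encoded as
   {ffun 'I_m1 -> 'I_p.+1}; every beta with |beta| <= p is of this form. *)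
Definition mindex (m1 p : nat) := {ffun 'I_m1 -> 'I_p.+1}.

Definition mabs (m1 p : nat) (b : mindex m1 p) : nat := (\sum_(i < m1) (b i : nat))%N.

(* binom(p, beta) = p! / (beta_1! ... beta_m1!)   (also when |beta| < p) *)
Definition mbinom (R : realType) (m1 p : nat) (b : mindex m1 p) : R :=
  (p`!)%:R / (\prod_(i < m1) ((b i : nat)`!)%:R).

Definition mpow (R : realType) (m1 p : nat) (z : 'I_m1 -> R) (b : mindex m1 p) : R :=
  \prod_(i < m1) z i ^+ (b i : nat).

Definition mpow_sq (R : realType) (m1 p : nat) (z : 'I_m1 -> R) (b : mindex m1 p) : R :=
  \prod_(i < m1) z i ^+ ((b i : nat) ^ 2)%N.

Definition ebasis (R : realType) (n : nat) (l : 'I_n) : 'rV[R]_n := delta_mx 0 l.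

Definition pderiv (R : realType) (n : nat) (f : 'rV[R]_n -> R) (l : 'I_n) (x : 'rV[R]_n) : R :=
  'D_(ebasis R l) f x.

Definition graddot (R : realType) (n : nat) (f g : 'rV[R]_n -> R) (x : 'rV[R]_n) : R :=
  \sum_(l < n) pderiv f l x * pderiv g l x.

Definition amat (R : realType) (m1 p : nat) (theta d : 'I_m1 -> R) (b : mindex m1 p)
    (i j : 'I_m1) : R :=
  if i == j then d i * theta i ^+ (4 * b i + 4)%N
  else (d i + d j) / 2 * theta i ^+ (2 * b i + 1)%N * theta j ^+ (2 * b j + 1)%N.

From HB Require Import structures.
From mathcomp Require Import all_boot all_order all_algebra.
From mathcomp Require Import all_classical all_reals all_analysis.
From mathcomp Require Import ring zify.
Import Order.TTheory GRing.Theory Num.Theory.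
Import numFieldNormedType.Exports.
Local Open Scope ring_scope.
Set Implicit Arguments. Unset Strict Implicit. Unset Printing Implicit Defensive.

(* By the product rule, grad u^beta = sum_j beta_j u^(beta - e_j) grad u_j.
   Substituting beta = gamma + e_j, the factor binom(p, beta) beta_j becomes
   binom(p, gamma) and theta^(beta^2) becomes theta^(gamma^2) theta_j^(2 gamma_j + 1),
   so the left-hand side is a sum over |gamma| = p - 2 of quadratic forms
   sum_(i,j) c_(i,j) grad u_i . grad u_j with
   c_(i,j) = d_i theta_i^(2 (gamma + e_j)_i + 1) theta_j^(2 gamma_j + 1).
   Since the Gram matrix grad u_i . grad u_j is symmetric, c may be replaced by
   its symmetric part, which is a. *)

Section MultiIndexShift.
Variables (m1 p : nat) (j : 'I_m1).

Definition mdec (b : mindex m1 p) : mindex m1 p :=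
  [ffun k => if k == j then inord (b k).-1 else b k].

(* [inord] wraps around: [minc b j = 0] when [b j = p], hence the hypothesis
   [b j < p] below. *)
Definition minc (b : mindex m1 p) : mindex m1 p :=
  [ffun k => if k == j then inord (b k).+1 else b k].

Lemma mdecE (b : mindex m1 p) k : (mdec b k : nat) = if k == j then (b k).-1 else b k.
Proof.
rewrite ffunE; case: eqP => // _; rewrite inordK //.
exact: leq_ltn_trans (leq_pred _) (ltn_ord _).
Qed.

Lemma mincE (b : mindex m1 p) k : (b j < p)%N -> (minc b k : nat) = (b k + (k == j))%N.
Proof.
move=> bj_lt; rewrite ffunE; case: eqP => [->|_]; last by rewrite addn0.
by rewrite inordK ?addn1.
Qed.

Lemma mincK (b : mindex m1 p) : (b j < p)%N -> mdec (minc b) = b.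
Proof.
move=> bj_lt; apply/ffunP => k; apply: val_inj => /=.
by rewrite mdecE mincE //; case: eqP => [->|_]; rewrite ?addn1 ?addn0.
Qed.

Lemma mdecK (b : mindex m1 p) : (0 < b j)%N -> minc (mdec b) = b.
Proof.
move=> bj_gt0; have decj_lt : (mdec b j < p)%N.
  by rewrite mdecE eqxx -ltnS prednK.
apply/ffunP => k; apply: val_inj => /=.
by rewrite mincE // mdecE; case: eqP => [->|_]; rewrite ?addn1 ?prednK ?addn0.
Qed.

Lemma leq_mabs (b : mindex m1 p) : (b j <= mabs b)%N.
Proof. by rewrite /mabs (bigD1 j) //= leq_addr. Qed.

Lemma mabs_minc (b : mindex m1 p) : (b j < p)%N -> mabs (minc b) = (mabs b).+1.
Proof.
move=> bj_lt; rewrite /mabs (eq_bigr _ (fun k _ => mincE k bj_lt)) big_split /=.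
suff -> : (\sum_(k < m1) (k == j) = 1)%N by rewrite addn1.
by rewrite (bigD1 j) //= big1 ?addn0 ?eqxx // => k /negPf ->.
Qed.

Lemma big_mabs_succ (V : nmodType) k (F : mindex m1 p -> V) :
  (k < p)%N -> (forall b : mindex m1 p, b j = 0 :> nat -> F b = 0) ->
  \sum_(b | mabs b == k.+1) F b = \sum_(g | mabs g == k) F (minc g).
Proof.
move=> k_lt F0; rewrite (bigID (fun b : mindex m1 p => 0 < b j)%N) /=.
rewrite [X in _ + X]big1 ?addr0; last first.
  by move=> b /andP[_]; rewrite -eqn0Ngt => /eqP/F0.
rewrite (reindex_onto minc mdec) /=; last by move=> b /andP[_ /mdecK].
apply: eq_bigl => g; case: (ltnP (g j) p) => [gj_lt | gj_ge].
  by rewrite mincK // eqxx mabs_minc // eqSS mincE // eqxx addn1 !andbT.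
have -> : (minc g j : nat) = 0%N.
  by rewrite ffunE eqxx /inord val_insubd ltnS ltnNge gj_ge.
rewrite ltnn andbF andFb; apply/esym/eqP => mabs_g.
by move: k_lt; rewrite -mabs_g ltnNge (leq_trans gj_ge (leq_mabs g)).
Qed.

End MultiIndexShift.

Section MultiIndexWeights.
Variables (R : realType) (m1 p : nat) (theta : 'I_m1 -> R) (j : 'I_m1).
Variables (g : mindex m1 p) (gj_lt : (g j < p)%N).

Lemma mbinom_minc : mbinom R (minc j g) * (minc j g j)%:R = mbinom R g.
Proof.
have fact_neq0 k : (k`!%:R : R) != 0 by rewrite pnatr_eq0 -lt0n fact_gt0.
rewrite /mbinom mincE // eqxx addn1 (bigD1 j) //= [in RHS](bigD1 j) //=.
rewrite mincE // eqxx addn1 factS natrM.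
rewrite (eq_bigr (fun k => ((g k)`!)%:R)); last first.
  by move=> k /negPf kj; rewrite mincE // kj addn0.
have prod_neq0 : \prod_(k < m1 | k != j) ((g k)`!)%:R != 0 :> R.
  by apply/prodf_neq0 => k _; exact: fact_neq0.
have succ_neq0 : 1 + (g j)%:R != 0 :> R by rewrite addrC natr1 pnatr_eq0.
by field; rewrite prod_neq0 fact_neq0 succ_neq0.
Qed.

Lemma mpow_sq_minc :
  mpow_sq theta (minc j g) = theta j ^+ (2 * g j + 1) * mpow_sq theta g.
Proof.
rewrite /mpow_sq (bigD1 j) //= [in RHS](bigD1 j) //= mincE // eqxx addn1.
rewrite (eq_bigr (fun k => theta k ^+ (g k ^ 2))); last first.
  by move=> k /negPf kj; rewrite mincE // kj addn0.
by rewrite mulrA -exprD; congr (_ ^+ _ * _); rewrite !expnS expn0; lia.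
Qed.

End MultiIndexWeights.

Lemma is_derive_bigprod (R : numFieldType) (V : normedModType R) m
    (f : 'I_m -> V -> R) (x v : V) (df : 'I_m -> R) :
  (forall i, is_derive x v (f i) (df i)) ->
  is_derive x v (fun y => \prod_(i < m) f i y)
    (\sum_(i < m) df i * \prod_(k < m | k != i) f k x).
Proof.
elim: m f df => [|m IH] f df f_df.
  rewrite big_ord0 (_ : (fun y => _) = cst 1); first exact: is_derive_cst.
  by apply: funext => y; rewrite big_ord0.
rewrite (_ : (fun y => _) =
    (fun y => \prod_(i < m) f (widen_ord (leqnSn m) i) y) * f ord_max); last first.
  by apply: funext => y; rewrite big_ord_recr.
have prod_lift (i : 'I_m.+1) :
  \prod_(k < m.+1 | k != i) f k x =
  \prod_(k < m | widen_ord (leqnSn m) k != i) f (widen_ord (leqnSn m) k) x *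
  (if ord_max != i then f ord_max x else 1).
  by rewrite big_mkcond big_ord_recr /= -big_mkcond.
apply: is_derive_eq
  (is_deriveM (IH _ _ (fun i => f_df (widen_ord (leqnSn m) i))) (f_df ord_max)) _.
rewrite /GRing.scale /= big_ord_recr /= addrC prod_lift eqxx mulr1.
rewrite [X in df ord_max * X](eq_bigl xpredT) => [|k]; last first.
  by rewrite -(inj_eq val_inj) /= ltn_eqF.
congr (_ + _); first by rewrite mulrC.
rewrite mulr_sumr; apply: eq_bigr => i _.
rewrite prod_lift -(inj_eq val_inj) /= gtn_eqF //.
rewrite (eq_bigl (fun k => k != i)) => [|k]; last by rewrite -(inj_eq val_inj).
by rewrite /=; ring.
Qed.

Section GradientOfMonomial.
Variables (R : realType) (m1 n p : nat) (u : 'I_m1 -> 'rV[R]_n -> R).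
Hypothesis u_diff : forall i x, differentiable (u i) x.

Lemma pderiv_mpow (b : mindex m1 p) l x :
  pderiv (fun y => mpow (fun k => u k y) b) l x =
  \sum_(j < m1) (b j)%:R * mpow (fun k => u k x) (mdec j b) * pderiv (u j) l x.
Proof.
have uX_df k : is_derive x (ebasis R l) (fun y => u k y ^+ b k)
    (((b k)%:R * u k x ^+ (b k).-1) *: pderiv (u k) l x).
  by rewrite -exprfctE; apply/is_deriveX/derivableP/diff_derivable.
have prod_df := is_derive_bigprod uX_df.
rewrite /pderiv /mpow derive_val.
apply: eq_bigr => j _; rewrite [in RHS](bigD1 j) //= mdecE eqxx.
rewrite [X in _ = _ * (_ * X) * _](eq_bigr (fun k => u k x ^+ b k)); last first.
  by move=> k /negPf kj; rewrite mdecE kj.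
by rewrite /GRing.scale /= /pderiv; ring.
Qed.

Lemma graddot_mpow (b : mindex m1 p) i x :
  graddot (u i) (fun y => mpow (fun k => u k y) b) x =
  \sum_(j < m1) (b j)%:R * mpow (fun k => u k x) (mdec j b) * graddot (u i) (u j) x.
Proof.
rewrite /graddot; under eq_bigr do rewrite pderiv_mpow mulr_sumr.
rewrite exchange_big; apply: eq_bigr => j _ /=.
by rewrite mulr_sumr; apply: eq_bigr => l _; ring.
Qed.

Lemma sum_graddot_mpow (w : 'I_m1 -> R) (b : mindex m1 p) x :
  \sum_(i < m1) w i * graddot (u i) (fun y => mpow (fun k => u k y) b) x =
  \sum_(j < m1) (b j)%:R * mpow (fun k => u k x) (mdec j b) *
    \sum_(i < m1) w i * graddot (u i) (u j) x.
Proof.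
transitivity (\sum_(i < m1) \sum_(j < m1)
    w i * ((b j)%:R * mpow (fun k => u k x) (mdec j b) * graddot (u i) (u j) x)).
  by apply: eq_bigr => i _; rewrite graddot_mpow mulr_sumr.
rewrite exchange_big; apply: eq_bigr => j _ /=.
by rewrite mulr_sumr; apply: eq_bigr => i _; ring.
Qed.

End GradientOfMonomial.

Lemma sum_quad_symmetrize (F : numFieldType) m (a c q : 'I_m -> 'I_m -> F) :
  (forall i j, q i j = q j i) -> (forall i j, a i j = (c i j + c j i) / 2) ->
  \sum_(i < m) \sum_(j < m) a i j * q i j = \sum_(i < m) \sum_(j < m) c i j * q i j.
Proof.
move=> qC a_sym; set S := RHS.
have transposed : \sum_(i < m) \sum_(j < m) c j i * q i j = S.
  by rewrite exchange_big; apply: eq_bigr => i _; apply: eq_bigr => j _; rewrite qC.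
transitivity ((S + S) / 2); last by clearbody S; field.
rewrite -{1}transposed -big_split mulr_suml; apply: eq_bigr => i _ /=.
rewrite -big_split mulr_suml; apply: eq_bigr => j _ /=.
by rewrite a_sym; field.
Qed.

Section CoefficientMatrix.
Variables (R : realType) (m1 p : nat) (theta d : 'I_m1 -> R).

Definition cmat (g : mindex m1 p) (i j : 'I_m1) : R :=
  d i * theta i ^+ (2 * (g i + (i == j)) + 1) * theta j ^+ (2 * g j + 1).

Lemma amat_symE g i j : amat theta d g i j = (cmat g i j + cmat g j i) / 2.
Proof.
rewrite /amat /cmat; case: eqP => [<-|/eqP ij]; last first.
  by rewrite eq_sym (negbTE ij) !addn0; field.
rewrite eqxx -!mulrA -!exprD.
have -> : (2 * (g i + true) + 1 + (2 * g i + 1) = 4 * g i + 4)%N by rewrite /=; lia.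
by field.
Qed.

Lemma big_mabs_succ_cmat (z : 'I_m1 -> R) (q : 'I_m1 -> 'I_m1 -> R) j k :
  (k < p)%N ->
  \sum_(b : mindex m1 p | mabs b == k.+1)
     mbinom R b * mpow_sq theta b * (b j)%:R * mpow z (mdec j b) *
     \sum_(i < m1) theta i ^+ (2 * b i + 1) * d i * q i j =
  \sum_(g : mindex m1 p | mabs g == k)
     mbinom R g * mpow_sq theta g * mpow z g * \sum_(i < m1) cmat g i j * q i j.
Proof.
move=> k_lt; rewrite (big_mabs_succ (j := j) k_lt) => [|b ->]; last first.
  by rewrite mulr0 !mul0r.
apply: eq_bigr => g /eqP mabs_g; have gj_lt : (g j < p)%N.
  by apply: leq_ltn_trans k_lt; rewrite -mabs_g leq_mabs.
rewrite mincK // -(mbinom_minc _ gj_lt) (mpow_sq_minc _ gj_lt) !mulr_sumr.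
by apply: eq_bigr => i _; rewrite /cmat (mincE i gj_lt); ring.
Qed.

End CoefficientMatrix.

Section GramMatrix.
Variables (R : realType) (m1 n : nat) (u : 'I_m1 -> 'rV[R]_n -> R) (x : 'rV[R]_n).

Lemma graddotC f h : graddot f h x = graddot h f x.
Proof. by apply: eq_bigr => l _; rewrite mulrC. Qed.

Lemma sum_pderiv_quad (c : 'I_m1 -> 'I_m1 -> R) :
  \sum_(l < n) \sum_(i < m1) \sum_(j < m1) c i j * pderiv (u i) l x * pderiv (u j) l x =
  \sum_(i < m1) \sum_(j < m1) c i j * graddot (u i) (u j) x.
Proof.
rewrite exchange_big; apply: eq_bigr => i _; rewrite exchange_big.
by apply: eq_bigr => j _; rewrite mulr_sumr; apply: eq_bigr => l _; rewrite mulrA.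
Qed.

End GramMatrix.

Unset Implicit Arguments.

Theorem lemmaA2 (R : realType) (m1 n : nat) (theta d : 'I_m1 -> R)
  (u : 'I_m1 -> 'rV[R]_n -> R)
  (htheta : forall i, 0 < theta i)
  (hdiff : forall i x, differentiable (u i) x)
  (hcont : forall i l, continuous (pderiv (u i) l))
  (hpos : forall i x, 0 <= u i x)
  (p : nat) (hp : (2 <= p)%N) (x : 'rV[R]_n) :
  \sum_(b : mindex m1 p | mabs b == p.-1)
     mbinom R b * mpow_sq theta b *
     \sum_(i < m1) theta i ^+ (2 * b i + 1)%N * d i *
        graddot (u i) (fun y => mpow (fun k => u k y) b) x
  =
  \sum_(b : mindex m1 p | mabs b == p.-2)
     mbinom R b * mpow_sq theta b * mpow (fun k => u k x) b *
     \sum_(l < n) \sum_(i < m1) \sum_(j < m1)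
        amat theta d b i j * pderiv (u i) l x * pderiv (u j) l x.
Proof.
pose Q i j := graddot (u i) (u j) x.
have p1E : p.-1 = (p.-2).+1 by case: (p) hp => [|[|q]].
have p2_lt : (p.-2 < p)%N by case: (p) hp => [|[|q]].
transitivity (\sum_(j < m1) \sum_(b : mindex m1 p | mabs b == p.-1)
      mbinom R b * mpow_sq theta b * (b j)%:R * mpow (fun k => u k x) (mdec j b) *
      \sum_(i < m1) theta i ^+ (2 * b i + 1) * d i * Q i j).
  rewrite exchange_big; apply: eq_bigr => b _ /=.
  rewrite (sum_graddot_mpow hdiff (fun i => theta i ^+ (2 * b i + 1) * d i)) mulr_sumr.
  by apply: eq_bigr => j _; rewrite !mulrA.
rewrite p1E (eq_bigr _ (fun j _ => big_mabs_succ_cmat theta d _ _ j p2_lt)).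
rewrite exchange_big; apply: eq_bigr => g _ /=.
rewrite -mulr_sumr sum_pderiv_quad exchange_big; congr (_ * _).
by apply/esym/sum_quad_symmetrize => i j; [exact: graddotC | exact: amat_symE].
Qed.
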